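(* Let $G=(V,E)$ be a (finite or infinite) graph without isolated edge, and let $L=\{L_v:v\in V\}\cup\{L_e:e\in E\}$ be a set of lists of weights for $G$. For a subgraph $H$ of $G$, let $L_H$ denote the restriction of $L$ to $V(H)\cup E(H)$, i.e. $L_H=\{L_v:v\in V(H)\}\cup\{L_e:e\in E(H)\}$. If every finite induced subgraph $H$ of $G$ that is not isomorphic to $K_2$ has an $L_H$-weighting, then $G$ has an $L$-weighting.
   Context: Graphs are simple and may be infinite; an isolated edge is a connected component isomorphic to $K_2$. Each list is a finite subset of $\{1,\dots,k\}$ for some natural number $k$. For a graph $F$ and a set of lists $M=\{M_v:v\in V(F)\}\cup\{M_e:e\in E(F)\}$, a weighting of $F$ from $M$ is a function $\omega\colon V(F)\cup E(F)\to\mathbb{Z}_{>0}$ with $\omega(v)\in M_v$ and $\omega(e)\in M_e$ for all vertices $v$ and edges $e$ of $F$. The weighted degree of a vertex $v$ in $F$ is $s_\omega(v)=\sum_{w\in N_F(v)}\omega(vw)+\omega(v)$; if $v$ has infinite degree $\kappa$ in $F$ this sum is the cardinal $\kappa$. An $M$-weighting of $F$ is a weighting $\omega$ of $F$ from $M$ such that for every edge $uv$ of $F$, either $s_\omega(u)\neq s_\omega(v)$, or $u$ and $v$ have the same infinite degree in $F$. *)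

(* Graphs are given by a vertex type V (possibly infinite)
   and an adjacency relation adj (assumed symmetric and irreflexive).
   Edge-indexed data (lists, weights) are functions V -> V -> _ that are
   required to be symmetric on edges. *)
From Stdlib Require Import List Arith.
Import ListNotations.

Definition list_in_range (k : nat) (l : list nat) : Prop :=
  forall x, In x l -> 1 <= x <= k.

Definition is_weighting {V : Type} (adj : V -> V -> Prop)
  (LV : V -> list nat) (LE : V -> V -> list nat)
  (wV : V -> nat) (wE : V -> V -> nat) : Prop :=
  (forall v, In (wV v) (LV v)) /\
  (forall u v, adj u v -> In (wE u v) (LE u v)) /\
  (forall u v, adj u v -> wE u v = wE v u).

Definition fin_deg {V : Type} (adj : V -> V -> Prop) (v : V) : Prop :=
  exists l : list V, NoDup l /\ forall w, In w l <-> adj v w.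

Definition has_wdeg {V : Type} (adj : V -> V -> Prop)
  (wV : V -> nat) (wE : V -> V -> nat) (v : V) (n : nat) : Prop :=
  exists l : list V, NoDup l /\ (forall w, In w l <-> adj v w) /\
    n = wV v + list_sum (map (wE v) l).

Definition same_card_nbhd {V : Type} (adj : V -> V -> Prop) (u v : V) : Prop :=
  exists (f : {w | adj u w} -> {w | adj v w}) (g : {w | adj v w} -> {w | adj u w}),
    (forall x, g (f x) = x) /\ (forall y, f (g y) = y).

(* s_omega(u) <> s_omega(v), where an infinite degree kappa gives s = kappa *)
Definition wdeg_differ {V : Type} (adj : V -> V -> Prop)
  (wV : V -> nat) (wE : V -> V -> nat) (u v : V) : Prop :=
  (fin_deg adj u /\ fin_deg adj v /\
     forall n m, has_wdeg adj wV wE u n -> has_wdeg adj wV wE v m -> n <> m)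
  \/ (fin_deg adj u /\ ~ fin_deg adj v)
  \/ (~ fin_deg adj u /\ fin_deg adj v)
  \/ (~ fin_deg adj u /\ ~ fin_deg adj v /\ ~ same_card_nbhd adj u v).

Definition same_inf_deg {V : Type} (adj : V -> V -> Prop) (u v : V) : Prop :=
  ~ fin_deg adj u /\ ~ fin_deg adj v /\ same_card_nbhd adj u v.

Definition is_M_weighting {V : Type} (adj : V -> V -> Prop)
  (LV : V -> list nat) (LE : V -> V -> list nat)
  (wV : V -> nat) (wE : V -> V -> nat) : Prop :=
  is_weighting adj LV LE wV wE /\
  forall u v, adj u v -> wdeg_differ adj wV wE u v \/ same_inf_deg adj u v.

Definition has_M_weighting {V : Type} (adj : V -> V -> Prop)
  (LV : V -> list nat) (LE : V -> V -> list nat) : Prop :=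
  exists wV wE, is_M_weighting adj LV LE wV wE.

Definition no_isolated_edge {V : Type} (adj : V -> V -> Prop) : Prop :=
  ~ exists u v, adj u v /\ (forall w, adj u w -> w = v) /\ (forall w, adj v w -> w = u).

Definition ind_vert {V : Type} (S : list V) : Type := {x : V | In x S}.

Definition ind_adj {V : Type} (adj : V -> V -> Prop) (S : list V)
  (x y : ind_vert S) : Prop := adj (proj1_sig x) (proj1_sig y).

Definition ind_LV {V : Type} (LV : V -> list nat) (S : list V)
  (x : ind_vert S) : list nat := LV (proj1_sig x).

Definition ind_LE {V : Type} (LE : V -> V -> list nat) (S : list V)
  (x y : ind_vert S) : list nat := LE (proj1_sig x) (proj1_sig y).

Definition induced_is_K2 {V : Type} (adj : V -> V -> Prop) (S : list V) : Prop :=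
  exists a b, adj a b /\ forall x, In x S <-> (x = a \/ x = b).

From Stdlib Require Import List Classical ClassicalEpsilon ProofIrrelevance.
From mathcomp Require boolp classical_sets.
Import ListNotations.

(* A weighting of G is a solution of a constraint system whose variables (the
   weights of vertices and of ordered pairs of vertices) range over finite
   lists and whose constraints each involve finitely many variables: for every
   edge uv and every listing of the neighbourhoods of u and v, the weight of uv
   is admissible and symmetric, and if both neighbourhoods are finite the
   weighted degrees of u and v differ.  Such a system is solvable as soon as every finite
   subsystem is (compactness, via Zorn's lemma on partial assignments that are
   consistent with every finite subsystem).  A finite subsystem mentions a
   finite vertex set, which can be enlarged to a set S not inducing K_2 since G
   has no isolated edge; an L-weighting of G[S] solves the subsystem, because
   the neighbourhoods listed in its constraints lie inside S. *)

Lemma ZL_preorder_Prop (T : Type) (t0 : T) (R : T -> T -> Prop) :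
  (forall t, R t t) -> (forall r s t, R r s -> R s t -> R r t) ->
  (forall A : T -> Prop, (forall s t, A s -> A t -> R s t \/ R t s) ->
     exists t, forall s, A s -> R s t) ->
  exists t, forall s, R t s -> R s t.
Proof.
intros Rrefl Rtrans Rchain.
pose (Rb s t := boolp.asbool (R s t)).
assert (RbE : forall s t, Rb s t = true <-> R s t).
{ intros s t; split; [apply boolp.asboolW | apply boolp.asboolT]. }
destruct (@classical_sets.ZL_preorder T t0 Rb) as [t Ht].
- intros t; apply RbE, Rrefl.
- intros r s u Hrs Hsu; apply RbE; apply RbE in Hrs, Hsu; eauto.
- intros A HA. destruct (Rchain A) as [t Ht].
  + intros s u Hs Hu. destruct (HA s u Hs Hu) as [H | H]; [left | right]; apply RbE, H.
  + exists t; intros s Hs; apply RbE; auto.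
- exists t; intros s Hs; apply RbE, Ht, RbE, Hs.
Qed.

Section Compactness.
Variables (X C : Type) (D : X -> list nat) (sat : C -> (X -> nat) -> Prop)
  (supp : C -> list X).
Hypothesis sat_local :
  forall c a b, (forall x, In x (supp c) -> a x = b x) -> sat c a -> sat c b.

Definition solves (W : list X) (cs : list C) (a : X -> nat) : Prop :=
  (forall x, In x W -> In (a x) (D x)) /\ (forall c, In c cs -> sat c a).

Hypothesis finitely_solvable : forall W cs, exists a, solves W cs a.

Definition agrees (p : X -> option nat) (W : list X) (a : X -> nat) : Prop :=
  forall x n, In x W -> p x = Some n -> a x = n.

Definition consistent (p : X -> option nat) : Prop :=
  forall W cs, exists a, solves W cs a /\ agrees p W a.

Definition extends (p q : X -> option nat) : Prop :=
  forall x n, p x = Some n -> q x = Some n.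

Lemma consistent_empty : consistent (fun _ => None).
Proof.
intros W cs. destruct (finitely_solvable W cs) as [a Ha].
exists a; split; [exact Ha | intros x n _ E; discriminate].
Qed.

Definition consistent_part : Type := {p | consistent p}.

Definition empty_part : consistent_part := exist _ _ consistent_empty.

Definition part_le (s t : consistent_part) : Prop :=
  extends (proj1_sig s) (proj1_sig t).

Definition chain_union (A : consistent_part -> Prop) (x : X) : option nat :=
  match excluded_middle_informative (exists n s, A s /\ proj1_sig s x = Some n) with
  | left H => Some (proj1_sig (constructive_indefinite_description _ H))
  | right _ => None
  end.

Section Chain.
Variable A : consistent_part -> Prop.
Hypothesis A_chain : forall s t, A s -> A t -> part_le s t \/ part_le t s.

Lemma chain_union_Some x n :
  chain_union A x = Some n -> exists s, A s /\ proj1_sig s x = Some n.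
Proof.
unfold chain_union. destruct excluded_middle_informative as [H | H]; [| discriminate].
destruct constructive_indefinite_description as [m Hm]; simpl.
intros E; injection E as <-; exact Hm.
Qed.


Lemma extends_chain_union s : A s -> extends (proj1_sig s) (chain_union A).
Proof.
intros As x n Hs. unfold chain_union.
destruct excluded_middle_informative as [H | H].
- destruct constructive_indefinite_description as [m [t [At Ht]]]; simpl.
  destruct (A_chain s t As At) as [Hst | Hts].
  + apply Hst in Hs. congruence.
  + apply Hts in Ht. congruence.
- exfalso; apply H; eauto.
Qed.

(* The empty assignment is below every element, so [A] together with it is
   still a chain; starting from it makes the induction uniform. *)
Lemma chain_union_covers (W : list X) :
  exists s, (A s \/ s = empty_part) /\
    forall x n, In x W -> chain_union A x = Some n -> proj1_sig s x = Some n.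
Proof.
induction W as [| x W [s [Hs Hcov]]].
- exists empty_part; split; [right; reflexivity | intros x n []].
- destruct (chain_union A x) as [n |] eqn:Ex.
  + destruct (chain_union_Some x n Ex) as [t [At Ht]].
    assert (Hcmp : part_le s t \/ part_le t s).
    { destruct Hs as [As | ->]; [now apply A_chain | left; intros y m E; discriminate]. }
    destruct Hcmp as [Hst | Hts].
    * exists t; split; [left; exact At |].
      intros y m [<- | Hy] Ey; [congruence | apply Hst, Hcov; assumption].
    * exists s; split; [exact Hs |].
      intros y m [<- | Hy] Ey; [apply Hts; congruence | apply Hcov; assumption].
  + exists s; split; [exact Hs |].
    intros y m [<- | Hy] Ey; [congruence | apply Hcov; assumption].
Qed.

Lemma chain_union_consistent : consistent (chain_union A).
Proof.
intros W cs. destruct (chain_union_covers W) as [s [_ Hcov]].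
destruct (proj2_sig s W cs) as [a [Ha Hag]].
exists a; split; [exact Ha |]. intros x n Hx E. apply Hag; auto.
Qed.

End Chain.

Definition update (p : X -> option nat) (x : X) (n : nat) : X -> option nat :=
  fun y => if excluded_middle_informative (y = x) then Some n else p y.

Definition refutes (p : X -> option nat) (W : list X) (cs : list C) : Prop :=
  forall a, solves W cs a -> agrees p W a -> False.

Lemma refutes_incl p W W' cs cs' :
  incl W W' -> incl cs cs' -> refutes p W cs -> refutes p W' cs'.
Proof.
intros HW Hcs Hp a [Hdom Hsat] Hag. apply (Hp a).
- split; intros; [apply Hdom, HW | apply Hsat, Hcs]; assumption.
- intros x n Hx; apply Hag, HW, Hx.
Qed.

Lemma refutes_common (q : nat -> X -> option nat) (l : list nat) :
  (forall n, In n l -> exists W cs, refutes (q n) W cs) ->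
  exists W cs, forall n, In n l -> refutes (q n) W cs.
Proof.
induction l as [| n l IH]; intros Hl.
- exists [], []; intros n [].
- destruct (Hl n (or_introl eq_refl)) as [W1 [cs1 H1]].
  destruct IH as [W2 [cs2 H2]]; [intros m Hm; apply Hl; right; exact Hm |].
  exists (W1 ++ W2), (cs1 ++ cs2). intros m [<- | Hm].
  + apply (refutes_incl _ W1 _ cs1); auto using incl_appl, incl_refl.
  + apply (refutes_incl _ W2 _ cs2); auto using incl_appr, incl_refl.
Qed.

Lemma maximal_consistent_total (p : X -> option nat) :
  consistent p -> (forall q, consistent q -> extends p q -> extends q p) ->
  forall x, exists n, p x = Some n.
Proof.
intros Hp Hmax x. destruct (p x) as [n |] eqn:Ex; [eauto | exfalso].
assert (Hupd : forall n, update p x n x = Some n).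
{ intros n; unfold update; destruct excluded_middle_informative; congruence. }
assert (Hext : forall n, extends p (update p x n)).
{ intros n y m E; unfold update; destruct excluded_middle_informative; congruence. }
assert (Href : forall n, exists W cs, refutes (update p x n) W cs).
{ intros n. apply NNPP; intros Hno.
  assert (Hcons : consistent (update p x n)).
  { intros W cs. apply NNPP; intros Hno'. apply Hno; exists W, cs.
    intros a Ha Hag; apply Hno'; eauto. }
  specialize (Hmax _ Hcons (Hext n) x n (Hupd n)). congruence. }
destruct (refutes_common (update p x) (D x) (fun n _ => Href n)) as [W [cs HW]].
destruct (Hp (x :: W) cs) as [a [[Hdom Hsat] Hag]].
apply (HW (a x) (Hdom x (or_introl eq_refl)) a).
- split; [intros y Hy; apply Hdom; right; exact Hy | exact Hsat].
- intros y m Hy E. unfold update in E.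
  destruct excluded_middle_informative as [-> | Hyx]; [congruence |].
  apply Hag; [right |]; assumption.
Qed.

Theorem compactness : exists a, (forall x, In (a x) (D x)) /\ forall c, sat c a.
Proof.
destruct (ZL_preorder_Prop _ empty_part part_le) as [[p Hp] Hmax].
- intros s x n; auto.
- intros r s t Hrs Hst x n E; auto.
- intros A HA. exists (exist _ _ (chain_union_consistent A HA)).
  intros s As; exact (extends_chain_union A HA s As).
- assert (Htot : forall x, exists n, p x = Some n).
  { apply maximal_consistent_total; [exact Hp |].
    intros q Hq; exact (Hmax (exist _ q Hq)). }
  exists (fun x => match p x with Some n => n | None => 0 end). split.
  + intros x. destruct (Htot x) as [n En]. rewrite En.
    destruct (Hp [x] []) as [a [[Hdom _] Hag]].
    rewrite <- (Hag x n (or_introl eq_refl) En). apply Hdom; left; reflexivity.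
  + intros c. destruct (Hp (supp c) [c]) as [a [[_ Hsat] Hag]].
    apply (sat_local c a); [| apply Hsat; left; reflexivity].
    intros x Hx. destruct (Htot x) as [n En]. rewrite En. apply Hag; assumption.
Qed.

End Compactness.

Definition is_nbhd {V : Type} (adj : V -> V -> Prop) (u : V) (l : list V) : Prop :=
  NoDup l /\ forall w, In w l <-> adj u w.

Section LocalCondition.
Context {V : Type} (adj : V -> V -> Prop) (LV : V -> list nat) (LE : V -> V -> list nat).

Definition edge_ok (wV : V -> nat) (wE : V -> V -> nat) (u v : V) (lu lv : list V) : Prop :=
  adj u v ->
  In (wE u v) (LE u v) /\ wE u v = wE v u /\
  (is_nbhd adj u lu -> is_nbhd adj v lv ->
   wV u + list_sum (map (wE u) lu) <> wV v + list_sum (map (wE v) lv)).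

Lemma edge_ok_of_M_weighting wV wE :
  is_M_weighting adj LV LE wV wE -> forall u v lu lv, edge_ok wV wE u v lu lv.
Proof.
intros [[_ [HE Hsym]] Hdiff] u v lu lv Huv.
split; [auto | split; [auto |]].
intros [Nu Fu] [Nv Fv].
assert (fin_deg adj u) by (exists lu; auto).
assert (fin_deg adj v) by (exists lv; auto).
destruct (Hdiff u v Huv) as [[[_ [_ Hne]] | [[_ Hn] | [[Hn _] | [Hn _]]]] | [Hn _]];
  try contradiction.
apply Hne; [exists lu | exists lv]; auto.
Qed.

(* An edge at a vertex of infinite degree needs no condition: it joins two
   different degrees or is covered by [same_inf_deg]. *)
Lemma M_weighting_of_edge_ok wV wE :
  (forall v, In (wV v) (LV v)) -> (forall u v lu lv, edge_ok wV wE u v lu lv) ->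
  is_M_weighting adj LV LE wV wE.
Proof.
intros HV Hok. split; [split; [exact HV | split] |].
- intros u v Huv; exact (proj1 (Hok u v [] [] Huv)).
- intros u v Huv; exact (proj1 (proj2 (Hok u v [] [] Huv))).
- intros u v Huv.
  destruct (classic (fin_deg adj u)) as [fu | fu];
    destruct (classic (fin_deg adj v)) as [fv | fv].
  + left; left; split; [exact fu | split; [exact fv |]].
    intros n m [lu [Nu [Fu ->]]] [lv [Nv [Fv ->]]].
    exact (proj2 (proj2 (Hok u v lu lv Huv)) (conj Nu Fu) (conj Nv Fv)).
  + left; right; left; auto.
  + left; right; right; left; auto.
  + destruct (classic (same_card_nbhd adj u v)).
    * right; repeat split; assumption.
    * left; right; right; right; auto.
Qed.

End LocalCondition.

Lemma ind_retraction_exists {V : Type} (S : list V) (s0 : V) :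
  In s0 S -> exists r : V -> ind_vert S, forall x (Hx : In x S), r x = exist _ x Hx.
Proof.
intros H0.
exists (fun x => match excluded_middle_informative (In x S) with
         | left Hx => exist _ x Hx
         | right _ => exist _ s0 H0
         end).
intros x Hx. destruct excluded_middle_informative as [Hx' | Hx'].
- f_equal; apply proof_irrelevance.
- contradiction.
Qed.

Section Induced.
Context {V : Type} (adj : V -> V -> Prop) (LE : V -> V -> list nat) (S : list V)
  (r : V -> ind_vert S).
Hypothesis adj_sym : forall u v, adj u v -> adj v u.
Hypothesis r_retraction : forall x (Hx : In x S), r x = exist _ x Hx.

Lemma retraction_val x : In x S -> proj1_sig (r x) = x.
Proof. intros Hx; rewrite (r_retraction x Hx); reflexivity. Qed.

Lemma is_nbhd_induced u lu :
  In u S -> incl lu S -> is_nbhd adj u lu -> is_nbhd (ind_adj adj S) (r u) (map r lu).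
Proof.
intros Hu Hlu [Nu Fu]. split.
- apply NoDup_map_NoDup_ForallPairs; [| exact Nu].
  intros x y Hx Hy E. rewrite <- (retraction_val x), <- (retraction_val y), E; auto.
- intros [y Hy]; split.
  + intros Hin. apply in_map_iff in Hin as [w [<- Hw]].
    unfold ind_adj. rewrite !retraction_val; auto. apply Fu, Hw.
  + unfold ind_adj; simpl. rewrite retraction_val by exact Hu. intros Huy.
    rewrite <- (r_retraction y Hy). apply in_map, Fu, Huy.
Qed.

(* Non-edges get the junk weight 0. *)
Definition lift_edge_weight (wE : ind_vert S -> ind_vert S -> nat) (u v : V) : nat :=
  if excluded_middle_informative (adj u v) then wE (r u) (r v) else 0.

Lemma edge_ok_lift wV wE u v lu lv :
  In u S -> In v S -> incl lu S -> incl lv S ->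
  edge_ok (ind_adj adj S) (ind_LE LE S) wV wE (r u) (r v) (map r lu) (map r lv) ->
  edge_ok adj LE (fun x => wV (r x)) (lift_edge_weight wE) u v lu lv.
Proof.
intros Hu Hv Hlu Hlv Hok Huv.
assert (Hlift : forall x y, adj x y -> lift_edge_weight wE x y = wE (r x) (r y)).
{ intros x y Hxy; unfold lift_edge_weight.
  destruct excluded_middle_informative; [reflexivity | contradiction]. }
assert (Hsum : forall x l, (forall w, In w l -> adj x w) ->
          list_sum (map (lift_edge_weight wE x) l) = list_sum (map (wE (r x)) (map r l))).
{ intros x l Hl. rewrite map_map. f_equal. apply map_ext_in; auto. }
assert (Huv' : ind_adj adj S (r u) (r v)).
{ unfold ind_adj; rewrite !retraction_val; assumption. }
destruct (Hok Huv') as [HL [Hs Hd]].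
rewrite (Hlift u v Huv), (Hlift v u (adj_sym u v Huv)). split; [| split].
- unfold ind_LE in HL. rewrite !retraction_val in HL; assumption.
- exact Hs.
- intros [Nu Fu] [Nv Fv].
  rewrite (Hsum u lu), (Hsum v lv) by (intros; apply Fu || apply Fv; assumption).
  apply Hd; apply is_nbhd_induced; try split; assumption.
Qed.

End Induced.

Lemma extend_to_non_K2 {V : Type} (adj : V -> V -> Prop) :
  (forall v, ~ adj v v) -> no_isolated_edge adj ->
  forall S0 : list V, exists S, incl S0 S /\ ~ induced_is_K2 adj S.
Proof.
intros Hirr Hni S0.
destruct (classic (induced_is_K2 adj S0)) as [[a [b [Hab HS]]] | HS0];
  [| exists S0; split; [apply incl_refl | exact HS0]].
assert (Hw : exists w e, adj e w /\ (e = a \/ e = b) /\ w <> a /\ w <> b).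
{ apply NNPP; intros Hn. apply Hni. exists a, b. split; [exact Hab | split].
  - intros w Haw. apply NNPP; intros Hw. apply Hn. exists w, a. repeat split; auto.
    intros ->; exact (Hirr a Haw).
  - intros w Hbw. apply NNPP; intros Hw. apply Hn. exists w, b. repeat split; auto.
    intros ->; exact (Hirr b Hbw). }
destruct Hw as [w [e [Hew [He [Hwa Hwb]]]]].
exists (w :: S0). split; [intros z Hz; right; exact Hz |].
intros [a' [b' [Hab' HS']]].
assert (Ha : a = a' \/ a = b') by (apply HS'; right; apply HS; auto).
assert (Hb : b = a' \/ b = b') by (apply HS'; right; apply HS; auto).
assert (Hw' : w = a' \/ w = b') by (apply HS'; left; reflexivity).
assert (a <> b) by (intros ->; exact (Hirr b Hab)).
destruct Ha, Hb, Hw'; subst; congruence.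
Qed.

Section WeightingSystem.
Context {V : Type} (adj : V -> V -> Prop) (LE : V -> V -> list nat).

Definition wvar : Type := (V + V * V)%type.

Definition wconstr : Type := (V * V * list V * list V)%type.

Definition vweights (a : wvar -> nat) (v : V) : nat := a (inl v).

Definition eweights (a : wvar -> nat) (u v : V) : nat := a (inr (u, v)).

Definition wsat (c : wconstr) (a : wvar -> nat) : Prop :=
  let '(u, v, lu, lv) := c in edge_ok adj LE (vweights a) (eweights a) u v lu lv.

Definition wsupp (c : wconstr) : list wvar :=
  let '(u, v, lu, lv) := c in
  inl u :: inl v :: inr (u, v) :: inr (v, u) ::
  map (fun w => inr (u, w)) lu ++ map (fun w => inr (v, w)) lv.

Lemma wsat_local c a b :
  (forall x, In x (wsupp c) -> a x = b x) -> wsat c a -> wsat c b.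
Proof.
destruct c as [[[u v] lu] lv]; simpl. intros Hab Hok Huv.
unfold vweights, eweights in *.
assert (Hu : forall w, In w lu -> a (inr (u, w)) = b (inr (u, w))).
{ intros w Hw. apply Hab. do 4 right. apply in_or_app; left. apply (in_map (fun w => inr (u, w))), Hw. }
assert (Hv : forall w, In w lv -> a (inr (v, w)) = b (inr (v, w))).
{ intros w Hw. apply Hab. do 4 right. apply in_or_app; right. apply (in_map (fun w => inr (v, w))), Hw. }
destruct (Hok Huv) as [HL [Hs Hd]].
rewrite <- (Hab (inr (u, v))), <- (Hab (inr (v, u))) by (simpl; tauto).
split; [exact HL | split; [exact Hs |]].
intros Nu Nv.
rewrite <- (Hab (inl u)), <- (Hab (inl v)) by (simpl; tauto).
rewrite <- (map_ext_in _ _ lu Hu), <- (map_ext_in _ _ lv Hv).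
exact (Hd Nu Nv).
Qed.

Context (LV : V -> list nat).

(* Every ordered pair of vertices carries a variable; the extra [0] keeps the
   domain of a non-edge nonempty. *)
Definition wdomain (x : wvar) : list nat :=
  match x with inl v => LV v | inr (u, v) => 0 :: LE u v end.

Definition wvar_vertices (x : wvar) : list V :=
  match x with inl v => [v] | inr (u, v) => [u; v] end.

Definition wconstr_vertices (c : wconstr) : list V :=
  let '(u, v, lu, lv) := c in u :: v :: lu ++ lv.

Hypothesis adj_sym : forall u v, adj u v -> adj v u.

Lemma induced_weighting_solves (S : list V) (s0 : V) :
  In s0 S -> has_M_weighting (ind_adj adj S) (ind_LV LV S) (ind_LE LE S) ->
  exists a, (forall x, incl (wvar_vertices x) S -> In (a x) (wdomain x)) /\
            (forall c, incl (wconstr_vertices c) S -> wsat c a).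
Proof.
intros Hs0 [wV [wE HM]].
destruct (ind_retraction_exists S s0 Hs0) as [r Hr].
pose (a x := match x with
             | inl v => wV (r v)
             | inr (u, v) => lift_edge_weight adj S r wE u v
             end).
assert (Hok : forall c, incl (wconstr_vertices c) S -> wsat c a).
{ intros [[[u v] lu] lv] Hsub.
  apply (edge_ok_lift adj LE S r adj_sym Hr).
  - apply Hsub; left; reflexivity.
  - apply Hsub; right; left; reflexivity.
  - intros z Hz; apply Hsub; right; right; apply in_or_app; left; exact Hz.
  - intros z Hz; apply Hsub; right; right; apply in_or_app; right; exact Hz.
  - apply edge_ok_of_M_weighting with (LV := ind_LV LV S); exact HM. }
exists a. split; [| exact Hok].
intros [v | [u v]] Hsub; simpl.
- destruct HM as [[HV _] _]. specialize (HV (r v)).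
  unfold ind_LV in HV. rewrite retraction_val in HV; [exact HV | exact Hr |].
  apply Hsub; left; reflexivity.
- destruct (classic (adj u v)) as [Huv | Huv].
  + right. exact (proj1 (Hok (u, v, [], []) (fun z Hz => Hsub z ltac:(simpl in *; tauto)) Huv)).
  + left. unfold lift_edge_weight.
    destruct excluded_middle_informative; [contradiction | reflexivity].
Qed.

Lemma weighting_system_finitely_solvable :
  (forall v, ~ adj v v) ->
  no_isolated_edge adj ->
  (forall S : list V, ~ induced_is_K2 adj S ->
     has_M_weighting (ind_adj adj S) (ind_LV LV S) (ind_LE LE S)) ->
  forall W cs, exists a, solves wvar wconstr wdomain wsat W cs a.
Proof.
intros Hirr Hni Hfin W cs.
destruct (extend_to_non_K2 adj Hirr Hni
            (flat_map wvar_vertices W ++ flat_map wconstr_vertices cs)) as [S [HS HK]].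
assert (HW : forall x, In x W -> incl (wvar_vertices x) S).
{ intros x Hx z Hz. apply HS, in_or_app; left. apply in_flat_map; eauto. }
assert (HC : forall c, In c cs -> incl (wconstr_vertices c) S).
{ intros c Hc z Hz. apply HS, in_or_app; right. apply in_flat_map; eauto. }
destruct S as [| s0 S'].
- exists (fun _ => 0). split.
  + intros [v | [v w]] Hx; exfalso; apply (HW _ Hx v); simpl; auto.
  + intros [[[u v] lu] lv] Hc; exfalso; apply (HC _ Hc u); simpl; auto.
- destruct (induced_weighting_solves (s0 :: S') s0 (or_introl eq_refl) (Hfin _ HK))
    as [a [Hdom Hsat]].
  exists a. split; intros; [apply Hdom, HW | apply Hsat, HC]; assumption.
Qed.

End WeightingSystem.

Theorem theorem5 (V : Type) (adj : V -> V -> Prop) (k : nat)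
  (LV : V -> list nat) (LE : V -> V -> list nat) :
  (forall u v, adj u v -> adj v u) ->
  (forall v, ~ adj v v) ->
  no_isolated_edge adj ->
  (forall v, list_in_range k (LV v)) ->
  (forall u v, adj u v -> list_in_range k (LE u v)) ->
  (forall u v, adj u v -> LE u v = LE v u) ->
  (forall S : list V, ~ induced_is_K2 adj S ->
     has_M_weighting (ind_adj adj S) (ind_LV LV S) (ind_LE LE S)) ->
  has_M_weighting adj LV LE.
Proof.
intros Hsym Hirr Hni _ _ _ Hfin.
destruct (compactness _ _ (wdomain LE LV) (wsat adj LE)
            wsupp (wsat_local adj LE)
            (weighting_system_finitely_solvable adj LE LV Hsym Hirr Hni Hfin))
  as [a [Hdom Hsat]].
exists (vweights a), (eweights a).
apply M_weighting_of_edge_ok.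
- intros v; exact (Hdom (inl v)).
- intros u v lu lv; exact (Hsat (u, v, lu, lv)).
Qed.
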